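(* Let $\ell>1$ be an odd integer. There exists $N_\ell\in\mathbb{N}$ such that, with the relation $\sim$ defined using $N=N_\ell$, the following holds. One can associate to each interval $J\subset\mathbb{R}_+$ a parallelogram $R(J)\subset\mathbb{R}^2$ such that $S_\ell(\tau,\tau')\subset R(\tau+\tau')$ for all dyadic intervals $\tau\sim\tau'$ in $\mathbb{R}_+$; moreover there exist $\beta_\ell>0$ and $\widetilde C_\ell\in\mathbb{N}$ such that for every pair of dyadic intervals $\tau\sim\tau'$ in $\mathbb{R}_+$, $$\#\{(\tau_1,\tau_1'):\ \tau_1\sim\tau_1'\subset\mathbb{R}_+ \text{ dyadic},\ (1+\beta_\ell)R(\tau+\tau')\cap(1+\beta_\ell)R(\tau_1+\tau_1')\ne\emptyset\}\le\widetilde C_\ell .$$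
   Context: $S_\ell(\tau,\tau'):=\{(\xi+\xi',\xi^\ell+(\xi')^\ell):\xi\in\tau,\xi'\in\tau'\}$. For a parallelogram $R$ and $\beta>0$, $(1+\beta)R$ is its dilate by factor $1+\beta$ about its center. A dyadic interval is $[k,k+1)2^j$ with $k,j\in\mathbb{Z}$, with length $|\tau|$ and center $c(\tau)$; $m$-parent = dyadic interval of length $2^m|\tau|$ containing $\tau$; two intervals are adjacent if they have equal length and share an endpoint; $\tau\sim\tau'$ means $|\tau|=|\tau'|$, the $m$-parents of $\tau,\tau'$ are not adjacent for $m=0,\dots,N-1$, and their $N$-parents are adjacent. $\tau+\tau'$ is the Minkowski sum. *)

From Stdlib Require Import Reals ZArith List Arith.
Open Scope R_scope.

(* Dyadic interval [k 2^j, (k+1) 2^j), indexed by (j, k) : Z * Z. *)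
Definition dyadic (d : Z * Z) : R -> Prop :=
  fun x => IZR (snd d) * powerRZ 2 (fst d) <= x /\
           x < IZR (snd d + 1) * powerRZ 2 (fst d).

Definition in_Rplus (d : Z * Z) : Prop := (0 <= snd d)%Z.

Definition parent (m : nat) (d : Z * Z) : Z * Z :=
  (fst d + Z.of_nat m, Z.div (snd d) (2 ^ Z.of_nat m))%Z.

Definition adjacent (d d' : Z * Z) : Prop :=
  fst d = fst d' /\ Z.abs (snd d - snd d') = 1%Z.

Definition sim (N : nat) (d d' : Z * Z) : Prop :=
  fst d = fst d' /\
  (forall m : nat, (m < N)%nat -> ~ adjacent (parent m d) (parent m d')) /\
  adjacent (parent N d) (parent N d').

Definition msum (A B : R -> Prop) : R -> Prop :=
  fun x => exists a b, A a /\ B b /\ x = a + b.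

Definition S_ell (l : nat) (A B : R -> Prop) : R * R -> Prop :=
  fun p => exists a b, A a /\ B b /\ p = (a + b, a ^ l + b ^ l).

(* A parallelogram is given by a center c and two edge half-vectors u, v
   (required linearly independent); it is the closed set
   { c + s u + t v : |s| <= 1, |t| <= 1 }. *)
Record para := Para { pc : R * R; pu : R * R; pv : R * R }.

Definition nondegenerate (P : para) : Prop :=
  fst (pu P) * snd (pv P) - snd (pu P) * fst (pv P) <> 0.

Definition dilate (lam : R) (P : para) : R * R -> Prop :=
  fun x => exists s t, Rabs s <= lam /\ Rabs t <= lam /\
    x = (fst (pc P) + s * fst (pu P) + t * fst (pv P),
         snd (pc P) + s * snd (pu P) + t * snd (pv P)).

Definition pset (P : para) : R * R -> Prop := dilate 1 P.

(* Write l = n + 2 and take N = 2n + 7, so that tau = [k, k+1) 2^j and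
   tau' = [k', k'+1) 2^j with tau ~ tau' satisfy 4G < |k - k'| < 16G, where
   G = 4^(n+2).  Every point (a + b, a^l + b^l) of S_l(tau, tau') lies above
   the curve x |-> 2 (x/2)^l (the image of the diagonal a = b) by an amount
   comparable, up to powers of G, to the scale U = ((s+1)P/4)^n P^2, where
   P = 2^j and s = k + k'; this follows from second-order Taylor bounds for
   t |-> t^l.  R(tau + tau') is the parallelogram over [sP, (s+2)P] whose
   slanted sides are parallel to the tangent of the curve at the centre and
   whose heights above that tangent range over [4G^2 U, 200G^4 U].

   After the dyadic bookkeeping (what ~ means for the
   indices, how R(J) is read off from J), these constraints confine an
   overlapping pair to a box of bounded size, which gives the count. *)

From Stdlib Require Import Reals ZArith List Arith Lra Lia Psatz ClassicalEpsilon.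
Open Scope R_scope.

Lemma Rabs_le_bounds x a : Rabs x <= a -> - a <= x <= a.
Proof. unfold Rabs; destruct Rcase_abs; lra. Qed.

Definition taylor_rem (n : nat) (m e : R) : R :=
  (m + e) ^ (n + 2) - m ^ (n + 2) - INR (n + 2) * m ^ (n + 1) * e.

Lemma taylor_rem_succ n m e :
  taylor_rem (S n) m e = (m + e) * taylor_rem n m e + INR (n + 2) * m ^ (n + 1) * e ^ 2.
Proof.
  unfold taylor_rem.
  replace (S n + 2)%nat with (S (S (n + 1))) by lia.
  replace (S n + 1)%nat with (S (n + 1)) by lia.
  replace (n + 2)%nat with (S (n + 1)) by lia.
  rewrite !S_INR; simpl; ring.
Qed.

Lemma INR_le_pow4 n : INR (n + 2) <= 4 ^ (n + 2).
Proof.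
  induction n as [|n IH]; [simpl; lra|].
  replace (S n + 2)%nat with (S (n + 2)) by lia.
  rewrite S_INR; simpl.
  assert (1 <= 4 ^ (n + 2)) by (apply pow_R1_Rle; lra). lra.
Qed.

Lemma taylor_rem_bounds n m e : 0 <= m -> Rabs e <= m ->
  m ^ n * e ^ 2 <= taylor_rem n m e <= 4 ^ (n + 2) * m ^ n * e ^ 2.
Proof.
  intros Hm He.
  assert (Hme : 0 <= m + e <= 2 * m) by (apply Rabs_le_bounds in He; lra).
  assert (He2 : 0 <= e ^ 2) by nra.
  induction n as [|n [IHlo IHhi]]; [unfold taylor_rem; simpl; split; nra|].
  rewrite taylor_rem_succ.
  assert (Hmn : 0 <= m ^ n) by (apply pow_le; lra).
  assert (Hc : 1 <= INR (n + 2) <= 4 ^ (n + 2)).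
  { split; [rewrite plus_INR; simpl; pose proof (pos_INR n); lra | apply INR_le_pow4]. }
  replace (m ^ (n + 1)) with (m * m ^ n) by (rewrite Nat.add_comm; simpl; ring).
  replace (4 ^ (S n + 2)) with (4 * 4 ^ (n + 2))
    by (replace (S n + 2)%nat with (S (n + 2)) by lia; simpl; ring).
  simpl (m ^ S n).
  set (r := taylor_rem n m e) in *; set (c := INR (n + 2)) in *; set (D := 4 ^ (n + 2)) in *.
  assert (0 <= m * m ^ n * e ^ 2) by (apply Rmult_le_pos; [nra|lra]).
  assert (Hr : 0 <= r) by (assert (0 <= m ^ n * e ^ 2) by nra; lra).
  split.
  - assert (0 <= (m + e) * r) by nra. nra.
  - assert ((m + e) * r <= 2 * m * (D * m ^ n * e ^ 2)) by nra. nra.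
Qed.

(* The curve [x |-> 2 (x/2)^(n+2)] is the image of the diagonal [a = b]
   under [(a, b) |-> (a + b, a^(n+2) + b^(n+2))]; [slope] is its derivative. *)
Definition curve (n : nat) (x : R) : R := 2 * (x / 2) ^ (n + 2).
Definition slope (n : nat) (x : R) : R := INR (n + 2) * (x / 2) ^ (n + 1).

Lemma curve_tangent n xc x :
  curve n x = curve n xc + slope n xc * (x - xc) + 2 * taylor_rem n (xc / 2) ((x - xc) / 2).
Proof.
  unfold curve, slope, taylor_rem.
  replace (xc / 2 + (x - xc) / 2) with (x / 2) by lra.
  set (u := (x / 2) ^ (n + 2)); set (v := (xc / 2) ^ (n + 2)); set (w := (xc / 2) ^ (n + 1)).
  field.
Qed.

Lemma power_sum_above_curve n a b : 0 <= a -> 0 <= b ->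
  let m := (a + b) / 2 in let d := (b - a) / 2 in
  2 * m ^ n * d ^ 2 <= a ^ (n + 2) + b ^ (n + 2) - curve n (a + b)
                    <= 2 * 4 ^ (n + 2) * m ^ n * d ^ 2.
Proof.
  intros Ha Hb m d.
  assert (Hsplit : a ^ (n + 2) + b ^ (n + 2) - curve n (a + b)
                   = taylor_rem n m d + taylor_rem n m (- d)).
  { unfold taylor_rem, curve, m, d.
    replace ((a + b) / 2 + (b - a) / 2) with b by field.
    replace ((a + b) / 2 + - ((b - a) / 2)) with a by field. ring. }
  assert (Hm : 0 <= m) by (unfold m; lra).
  assert (Hd : Rabs d <= m) by (apply Rabs_le; unfold m, d; lra).
  assert (Hd' : Rabs (- d) <= m) by (rewrite Rabs_Ropp; exact Hd).
  pose proof (taylor_rem_bounds n m d Hm Hd).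
  pose proof (taylor_rem_bounds n m (- d) Hm Hd').
  replace ((- d) ^ 2) with (d ^ 2) in * by ring.
  lra.
Qed.

Definition tangent_height (n : nat) (xc x y : R) : R :=
  y - curve n xc - slope n xc * (x - xc).

(* The parallelogram of horizontal half-width [P] around [xc] whose slanted
   sides are parallel to the tangent at [xc] and whose points have tangent
   height between [lo] and [hi]. *)
Definition band (n : nat) (xc P lo hi : R) : para :=
  Para (xc, curve n xc + (lo + hi) / 2) (P, slope n xc * P) (0, (hi - lo) / 2).

Lemma band_nondegenerate n xc P lo hi : 0 < P -> lo < hi ->
  nondegenerate (band n xc P lo hi).
Proof. intros HP Hlh. unfold nondegenerate, band; simpl. nra. Qed.

Lemma dilate_band n xc P lo hi lam x y : 0 < P -> lo < hi ->
  dilate lam (band n xc P lo hi) (x, y) <->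
  Rabs (x - xc) <= lam * P /\
  Rabs (tangent_height n xc x y - (lo + hi) / 2) <= lam * ((hi - lo) / 2).
Proof.
  intros HP Hlh. unfold dilate, band, tangent_height; simpl.
  assert (Hh : 0 < (hi - lo) / 2) by lra.
  split.
  - intros (s & t & Hs & Ht & E); injection E as Ex Ey; subst x y.
    split.
    + replace (xc + s * P + t * 0 - xc) with (s * P) by ring.
      rewrite Rabs_mult, (Rabs_pos_eq P) by lra. nra.
    + replace (curve n xc + (lo + hi) / 2 + s * (slope n xc * P) + t * ((hi - lo) / 2)
               - curve n xc - slope n xc * (xc + s * P + t * 0 - xc) - (lo + hi) / 2)
        with (t * ((hi - lo) / 2)) by ring.
      rewrite Rabs_mult, (Rabs_pos_eq ((hi - lo) / 2)) by lra. nra.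
  - intros [Hx Hy].
    exists ((x - xc) / P),
      ((y - curve n xc - slope n xc * (x - xc) - (lo + hi) / 2) / ((hi - lo) / 2)).
    split; [|split].
    + unfold Rdiv; rewrite Rabs_mult, Rabs_inv, (Rabs_pos_eq P) by lra.
      apply Rmult_le_reg_r with P; [lra|]. field_simplify; lra.
    + unfold Rdiv at 1; rewrite Rabs_mult, Rabs_inv, (Rabs_pos_eq ((hi - lo) / 2)) by lra.
      apply Rmult_le_reg_r with ((hi - lo) / 2); [lra|]. field_simplify; lra.
    + f_equal; field; lra.
Qed.

Lemma band_contains n xc P lo hi x y : 0 < P -> lo < hi ->
  Rabs (x - xc) <= P -> lo <= tangent_height n xc x y <= hi ->
  pset (band n xc P lo hi) (x, y).
Proof.
  intros HP Hlh Hx Hy. apply dilate_band; [lra | lra |].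
  split; [lra|]. apply Rabs_le; lra.
Qed.

Lemma dilate_band_bounds n xc P lo hi beta x y : 0 < P -> lo < hi -> 0 <= beta ->
  dilate (1 + beta) (band n xc P lo hi) (x, y) ->
  Rabs (x - xc) <= (1 + beta) * P /\
  lo - beta * ((hi - lo) / 2) <= tangent_height n xc x y <= hi + beta * ((hi - lo) / 2).
Proof.
  intros HP Hlh Hb D. apply dilate_band in D as [Hx Hy]; [|lra|lra].
  split; [exact Hx|]. apply Rabs_le_bounds in Hy. lra.
Qed.

(* The constant [4^(n+2)] bounding all the Taylor remainders. *)
Definition G (n : nat) : R := 4 ^ (n + 2).

Lemma G_bounds n : 1 <= G n /\ 0 < 2 ^ n /\ 2 ^ n <= G n /\ 4 ^ n <= G n.
Proof.
  unfold G.
  assert (H4 : 4 ^ n <= 4 ^ (n + 2)) by (apply Rle_pow; [lra|lia]).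
  assert (H2 : 2 ^ n <= 4 ^ n) by (apply pow_incr; lra).
  repeat split; [apply pow_R1_Rle; lra | apply pow_lt; lra | lra | lra].
Qed.

Lemma G_sq_bounds n : 1 <= G n ^ 2 <= G n ^ 4.
Proof.
  destruct (G_bounds n) as [HG _].
  assert (1 <= G n ^ 2) by nra.
  split; [lra | replace (G n ^ 4) with (G n ^ 2 * G n ^ 2) by ring; nra].
Qed.

(* For the sum [[sP, (s+2)P)] of two dyadic intervals of length [P], the
   parallelogram is centred at [(s+1)P]; its vertical size is governed by the
   scale [U = ((s+1)P/4)^n P^2]. *)
Definition scale (n : nat) (P s : R) : R := ((s + 1) * P / 4) ^ n * P ^ 2.

Definition par (n : nat) (P s : R) : para :=
  band n ((s + 1) * P) P (4 * G n ^ 2 * scale n P s) (200 * G n ^ 4 * scale n P s).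

Definition beta (n : nat) : R := / (100 * G n ^ 2).

Lemma beta_bounds n : 0 < beta n <= 1 / 100 /\
  beta n * ((200 * G n ^ 4 - 4 * G n ^ 2) / 2) <= G n ^ 2.
Proof.
  destruct (G_bounds n) as [HG _]. unfold beta. set (g := G n) in *.
  assert (Hg2 : 1 <= g ^ 2) by nra.
  split; [split|].
  - apply Rinv_0_lt_compat; lra.
  - replace (1 / 100) with (/ 100) by field. apply Rinv_le_contravar; lra.
  - replace (/ (100 * g ^ 2) * ((200 * g ^ 4 - 4 * g ^ 2) / 2)) with (g ^ 2 - 2 / 100)
      by (field; lra). lra.
Qed.

Section Parallelogram.

Variables (n : nat) (P s : R).
Hypotheses (HP : 0 < P) (Hs : 3 <= s).

Let xc := (s + 1) * P.
Let mu := (s + 1) * P / 4.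

Lemma scale_pos : 0 < scale n P s.
Proof. unfold scale. apply Rmult_lt_0_compat; apply pow_lt; nra. Qed.

Lemma par_heights_ordered : 4 * G n ^ 2 * scale n P s < 200 * G n ^ 4 * scale n P s.
Proof.
  pose proof scale_pos. pose proof (G_sq_bounds n).
  set (g := G n) in *; set (U := scale n P s) in *. nra.
Qed.

Lemma par_nondegenerate : nondegenerate (par n P s).
Proof. exact (band_nondegenerate _ _ _ _ _ HP par_heights_ordered). Qed.

Lemma tangent_gap x : Rabs (x - xc) <= 2 * P ->
  0 <= 2 * taylor_rem n (xc / 2) ((x - xc) / 2) <= G n ^ 2 * mu ^ n * (x - xc) ^ 2 / 2.
Proof.
  intros Hx. destruct (G_bounds n) as (HG & H2p & H2G & _).
  assert (Hmc : 0 <= xc / 2) by (unfold xc; nra).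
  assert (He : Rabs ((x - xc) / 2) <= xc / 2).
  { apply Rabs_le. apply Rabs_le_bounds in Hx. unfold xc in *. nra. }
  destruct (taylor_rem_bounds n _ _ Hmc He) as [Hlo Hhi]. fold (G n) in Hhi.
  assert (Hmc_n : (xc / 2) ^ n = 2 ^ n * mu ^ n)
    by (rewrite <- Rpow_mult_distr; f_equal; unfold mu, xc; field).
  rewrite Hmc_n in Hlo, Hhi.
  assert (Hmu : 0 <= mu ^ n) by (apply pow_le; unfold mu; nra).
  replace (((x - xc) / 2) ^ 2) with ((x - xc) ^ 2 / 4) in * by field.
  assert (Hsq : 0 <= (x - xc) ^ 2) by apply pow2_ge_0.
  assert (H1 : 0 <= 2 ^ n * mu ^ n * ((x - xc) ^ 2 / 4)) by
    (apply Rmult_le_pos; [apply Rmult_le_pos|]; lra).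
  assert (H2 : G n * (2 ^ n * mu ^ n) * ((x - xc) ^ 2 / 4)
               <= G n * (G n * mu ^ n) * ((x - xc) ^ 2 / 4)).
  { apply Rmult_le_compat_r; [lra|]. apply Rmult_le_compat_l; [lra|].
    apply Rmult_le_compat_r; lra. }
  split; [lra|]. nra.
Qed.

Lemma height_above_curve x y :
  y - curve n x = tangent_height n xc x y - 2 * taylor_rem n (xc / 2) ((x - xc) / 2).
Proof. unfold tangent_height. rewrite (curve_tangent n xc x). ring. Qed.

Lemma pair_above_curve a b : 0 <= a -> 0 <= b ->
  s * P <= a + b <= (s + 2) * P ->
  2 * G n * P <= Rabs ((b - a) / 2) <= 8 * G n * P ->
  8 * G n ^ 2 * scale n P s <= a ^ (n + 2) + b ^ (n + 2) - curve n (a + b)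
                            <= 128 * G n ^ 4 * scale n P s.
Proof.
  intros Ha Hb Hx Hd. destruct (G_bounds n) as (HG & _ & _ & H4G).
  pose proof (power_sum_above_curve n a b Ha Hb) as Habove; cbv zeta in Habove.
  fold (G n) in Habove. unfold scale; fold mu.
  set (m := (a + b) / 2) in *; set (d := (b - a) / 2) in *.
  assert (Hmu : 0 < mu ^ n) by (apply pow_lt; unfold mu; nra).
  assert (Hm : mu ^ n <= m ^ n <= G n * mu ^ n).
  { split; [apply pow_incr; unfold m, mu; nra|].
    apply Rle_trans with (4 ^ n * mu ^ n); [|apply Rmult_le_compat_r; lra].
    rewrite <- Rpow_mult_distr. apply pow_incr. unfold m, mu; nra. }
  assert (Hd2 : 4 * G n ^ 2 * P ^ 2 <= d ^ 2 <= 64 * G n ^ 2 * P ^ 2).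
  { rewrite <- (pow2_abs d). split.
    - replace (4 * G n ^ 2 * P ^ 2) with ((2 * G n * P) ^ 2) by ring.
      apply pow_incr; nra.
    - replace (64 * G n ^ 2 * P ^ 2) with ((8 * G n * P) ^ 2) by ring.
      apply pow_incr; split; [apply Rabs_pos | lra]. }
  set (g := G n) in *.
  split.
  - assert (mu ^ n * (4 * g ^ 2 * P ^ 2) <= m ^ n * d ^ 2)
      by (apply Rmult_le_compat; nra). nra.
  - assert (m ^ n * d ^ 2 <= (g * mu ^ n) * (64 * g ^ 2 * P ^ 2))
      by (apply Rmult_le_compat; nra). nra.
Qed.

(* Containment: such a pair is mapped into the parallelogram, since its
   tangent height exceeds its height above the curve by at most [G^2 U / 2]. *)
Lemma par_contains a b : 0 <= a -> 0 <= b ->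
  s * P <= a + b <= (s + 2) * P ->
  2 * G n * P <= Rabs ((b - a) / 2) <= 8 * G n * P ->
  pset (par n P s) (a + b, a ^ (n + 2) + b ^ (n + 2)).
Proof.
  intros Ha Hb Hx Hd.
  pose proof (pair_above_curve a b Ha Hb Hx Hd) as Habove.
  assert (Hxc : Rabs (a + b - xc) <= P) by (apply Rabs_le; unfold xc; lra).
  pose proof (tangent_gap (a + b) ltac:(lra)) as Hgap.
  pose proof (height_above_curve (a + b) (a ^ (n + 2) + b ^ (n + 2))) as Hh.
  assert (Hsq : (a + b - xc) ^ 2 <= P ^ 2)
    by (rewrite <- (pow2_abs (a + b - xc)); apply pow_incr; split; [apply Rabs_pos | lra]).
  pose proof (G_sq_bounds n) as Hg. pose proof scale_pos as HU.
  assert (Hmu : 0 <= mu ^ n) by (apply pow_le; unfold mu; nra).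
  assert (Hgap' : G n ^ 2 * mu ^ n * (a + b - xc) ^ 2 / 2 <= G n ^ 2 * scale n P s / 2).
  { apply Rmult_le_compat_r; [lra|]. unfold scale; fold mu.
    rewrite <- Rmult_assoc. apply Rmult_le_compat_l; nra. }
  assert (Hg4 : G n ^ 2 * scale n P s <= G n ^ 4 * scale n P s)
    by (apply Rmult_le_compat_r; lra).
  apply band_contains; [exact HP | exact par_heights_ordered | exact Hxc | ].
  fold xc; lra.
Qed.

Lemma par_dilate_height x y : dilate (1 + beta n) (par n P s) (x, y) ->
  Rabs (x - xc) <= 2 * P /\
  G n ^ 2 * scale n P s <= y - curve n x <= 201 * G n ^ 4 * scale n P s.
Proof.
  intros D. pose proof scale_pos as HU.
  destruct (beta_bounds n) as [[Hb0 Hb1] Hbh].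
  pose proof (G_sq_bounds n) as Hg. set (g := G n) in *; set (U := scale n P s) in *.
  apply dilate_band_bounds in D as [Hx Hh]; [|exact HP|exact par_heights_ordered|lra].
  assert (Hx2 : Rabs (x - xc) <= 2 * P) by (fold xc in Hx; nra).
  split; [exact Hx2|].
  pose proof (tangent_gap x Hx2) as Hgap. rewrite (height_above_curve x y).
  fold xc in Hh.
  assert (Hbeta : beta n * ((200 * g ^ 4 * U - 4 * g ^ 2 * U) / 2) <= g ^ 2 * U).
  { replace ((200 * g ^ 4 * U - 4 * g ^ 2 * U) / 2)
      with ((200 * g ^ 4 - 4 * g ^ 2) / 2 * U) by field.
    rewrite <- Rmult_assoc. apply Rmult_le_compat_r; lra. }
  assert (Hsq : (x - xc) ^ 2 <= 4 * P ^ 2)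
    by (rewrite <- (pow2_abs (x - xc)); replace (4 * P ^ 2) with ((2 * P) ^ 2) by ring;
        apply pow_incr; split; [apply Rabs_pos | lra]).
  assert (Hgap' : g ^ 2 * mu ^ n * (x - xc) ^ 2 / 2 <= 2 * g ^ 2 * U).
  { unfold U, scale. fold mu.
    assert (0 <= g ^ 2 * mu ^ n / 2) by (pose proof (pow_le mu n ltac:(unfold mu; nra)); nra).
    replace (g ^ 2 * mu ^ n * (x - xc) ^ 2 / 2) with (g ^ 2 * mu ^ n / 2 * (x - xc) ^ 2) by field.
    replace (2 * g ^ 2 * (mu ^ n * P ^ 2)) with (g ^ 2 * mu ^ n / 2 * (4 * P ^ 2)) by field.
    apply Rmult_le_compat_l; lra. }
  assert (Hg4 : g ^ 2 * U <= g ^ 4 * U) by (apply Rmult_le_compat_r; lra).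
  change (G n) with g in Hh, Hgap; change (scale n P s) with U in Hh. split; lra.
Qed.

End Parallelogram.

(* Two dilated parallelograms that meet have comparable widths and nearby
   centres: this is what makes the overlap count finite. *)
Lemma par_overlap n P s P1 s1 x y : 0 < P -> 3 <= s -> 0 < P1 -> 3 <= s1 ->
  dilate (1 + beta n) (par n P s) (x, y) -> dilate (1 + beta n) (par n P1 s1) (x, y) ->
  P ^ 2 <= 201 * G n ^ 3 * P1 ^ 2 /\ Rabs ((s + 1) * P - (s1 + 1) * P1) <= 2 * P + 2 * P1.
Proof.
  intros HP Hs HP1 Hs1 D D1.
  destruct (par_dilate_height n P s HP Hs x y D) as [Hx [Hlo _]].
  destruct (par_dilate_height n P1 s1 HP1 Hs1 x y D1) as [Hx1 [_ Hhi]].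
  apply Rabs_le_bounds in Hx, Hx1.
  split; [|apply Rabs_le; lra].
  destruct (G_bounds n) as (HG & _ & _ & H4G).
  unfold scale in Hlo, Hhi.
  set (mu := (s + 1) * P / 4) in *; set (mu1 := (s1 + 1) * P1 / 4) in *.
  assert (Hmu : 0 < mu ^ n) by (apply pow_lt; unfold mu; nra).
  assert (Hmu1 : mu1 ^ n <= G n * mu ^ n).
  { apply Rle_trans with (4 ^ n * mu ^ n); [|apply Rmult_le_compat_r; lra].
    rewrite <- Rpow_mult_distr. apply pow_incr. unfold mu, mu1 in *; nra. }
  set (g := G n) in *.
  assert (Hg2 : 0 < g ^ 2 * mu ^ n) by (apply Rmult_lt_0_compat; [apply pow_lt|]; lra).
  assert (Hchain : g ^ 2 * mu ^ n * P ^ 2 <= g ^ 2 * mu ^ n * (201 * g ^ 3 * P1 ^ 2)).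
  { apply Rle_trans with (201 * g ^ 4 * (mu1 ^ n * P1 ^ 2)); [lra|].
    replace (g ^ 2 * mu ^ n * (201 * g ^ 3 * P1 ^ 2))
      with (201 * g ^ 4 * ((g * mu ^ n) * P1 ^ 2)) by ring.
    apply Rmult_le_compat_l; [pose proof (pow_le g 4); lra|].
    apply Rmult_le_compat_r; [apply pow2_ge_0 | exact Hmu1]. }
  apply Rmult_le_reg_l in Hchain; [exact Hchain | exact Hg2].
Qed.

Definition pw (j : Z) : R := powerRZ 2 j.

Lemma pw_pos j : 0 < pw j.
Proof. apply powerRZ_lt; lra. Qed.

Lemma pw_add a b : pw (a + b) = pw a * pw b.
Proof. apply powerRZ_add; lra. Qed.

Lemma pw_nat t : pw (Z.of_nat t) = 2 ^ t.
Proof. unfold pw. rewrite pow_powerRZ. reflexivity. Qed.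

Lemma pw_lt a b : (a < b)%Z -> pw a < pw b.
Proof.
  intros H. unfold pw. rewrite !powerRZ_Rpower by lra.
  apply Rpower_lt; [lra | apply IZR_lt, H].
Qed.

Lemma pw_le a b : (a <= b)%Z -> pw a <= pw b.
Proof.
  intros H. destruct (Z.eq_dec a b) as [->|E]; [lra|].
  left; apply pw_lt; lia.
Qed.

Lemma pw_inj a b : pw a = pw b -> a = b.
Proof.
  intros E. destruct (Z.lt_trichotomy a b) as [H|[H|H]]; [|exact H|];
    apply pw_lt in H; lra.
Qed.

Lemma dyadic_iff j k x : dyadic (j, k) x <-> IZR k * pw j <= x < (IZR k + 1) * pw j.
Proof. unfold dyadic; simpl. rewrite plus_IZR. reflexivity. Qed.

Definition pair_interval (j s : Z) (x : R) : Prop :=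
  IZR s * pw j <= x < (IZR s + 2) * pw j.

Lemma msum_dyadic j k k' x :
  msum (dyadic (j, k)) (dyadic (j, k')) x <-> pair_interval j (k + k') x.
Proof.
  unfold msum, pair_interval. rewrite plus_IZR. pose proof (pw_pos j). split.
  - intros (a & b & Ha & Hb & ->). apply dyadic_iff in Ha, Hb. lra.
  - intros Hx. set (t := (x - (IZR k + IZR k') * pw j) / 2).
    exists (IZR k * pw j + t), (IZR k' * pw j + t).
    rewrite !dyadic_iff. unfold t. repeat split; lra.
Qed.

Lemma pair_interval_inj j s j' s' :
  (forall x, pair_interval j s x <-> pair_interval j' s' x) -> j = j' /\ s = s'.
Proof.
  intros H. unfold pair_interval in H. pose proof (pw_pos j). pose proof (pw_pos j').
  assert (Hleft : IZR s * pw j = IZR s' * pw j').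
  { pose proof (proj1 (H (IZR s * pw j)) ltac:(lra)).
    pose proof (proj2 (H (IZR s' * pw j')) ltac:(lra)). lra. }
  assert (Hright : (IZR s + 2) * pw j = (IZR s' + 2) * pw j').
  { destruct (Rtotal_order ((IZR s + 2) * pw j) ((IZR s' + 2) * pw j')) as [T|[T|T]];
      [pose proof (proj2 (H ((IZR s + 2) * pw j)) ltac:(lra)) |
       exact T |
       pose proof (proj1 (H ((IZR s' + 2) * pw j')) ltac:(lra))]; lra. }
  assert (Ej : j = j') by (apply pw_inj; lra). subst j'.
  split; [reflexivity|]. apply eq_IZR, (Rmult_eq_reg_r (pw j)); lra.
Qed.

(* The parameters [(j, s)] of a set that is a pair interval, chosen
   classically; [(0, 0)] for any other set. *)
Definition pair_code (J : R -> Prop) : Z * Z :=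
  match excluded_middle_informative
          (exists p : Z * Z, forall x, J x <-> pair_interval (fst p) (snd p) x) with
  | left h => proj1_sig (constructive_indefinite_description _ h)
  | right _ => (0, 0)%Z
  end.

Lemma pair_code_spec j s J :
  (forall x, J x <-> pair_interval j s x) -> pair_code J = (j, s).
Proof.
  intros HJ. unfold pair_code.
  destruct excluded_middle_informative as [h|h]; [|exfalso; apply h; exists (j, s); exact HJ].
  destruct (constructive_indefinite_description _ h) as [[j' s'] Hp]; simpl.
  destruct (pair_interval_inj j' s' j s) as [-> ->]; [|reflexivity].
  intros x. rewrite <- Hp, HJ. reflexivity.
Qed.

(* The parallelogram [R(J)]: for [J = [s 2^j, (s+2) 2^j)] it is [par] with
   [P = 2^j]; the parameter [s] is clamped to [s >= 3], which holds for every
   sum [tau + tau'] with [tau ~ tau'], so that [R(J)] is always a genuine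
   parallelogram. *)
Definition Rpar (n : nat) (J : R -> Prop) : para :=
  par n (pw (fst (pair_code J))) (IZR (Z.max 3 (snd (pair_code J)))).

Lemma Rpar_nondegenerate n J : nondegenerate (Rpar n J).
Proof.
  apply par_nondegenerate; [apply pw_pos|]. apply IZR_le. lia.
Qed.

Lemma Rpar_sum n j k k' : (3 <= k + k')%Z ->
  Rpar n (msum (dyadic (j, k)) (dyadic (j, k'))) = par n (pw j) (IZR (k + k')).
Proof.
  intros Hs. unfold Rpar.
  rewrite (pair_code_spec j (k + k')) by apply msum_dyadic. simpl.
  f_equal. f_equal. lia.
Qed.

Lemma halves_adjacent_gap A A' :
  Z.abs (A / 2 - A' / 2) = 1%Z -> Z.abs (A - A') <> 1%Z ->
  (2 <= Z.abs (A - A') <= 3)%Z.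
Proof.
  intros H1 H2.
  pose proof (Z.div_mod A 2 ltac:(lia)). pose proof (Z.mod_pos_bound A 2 ltac:(lia)).
  pose proof (Z.div_mod A' 2 ltac:(lia)). pose proof (Z.mod_pos_bound A' 2 ltac:(lia)).
  lia.
Qed.

Lemma quotient_gap M k k' : (0 < M)%Z ->
  (2 <= Z.abs (k / M - k' / M) <= 3)%Z ->
  (M + 1 <= Z.abs (k - k') <= 4 * M - 1)%Z.
Proof.
  intros HM Hq.
  pose proof (Z.div_mod k M ltac:(lia)). pose proof (Z.mod_pos_bound k M HM).
  pose proof (Z.div_mod k' M ltac:(lia)). pose proof (Z.mod_pos_bound k' M HM).
  set (A := (k / M)%Z) in *; set (A' := (k' / M)%Z) in *.
  set (r := (k mod M)%Z) in *; set (r' := (k' mod M)%Z) in *.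
  clearbody A A' r r'.
  assert (HA : (A = A' + 2 \/ A = A' + 3 \/ A' = A + 2 \/ A' = A + 3)%Z) by lia.
  destruct HA as [-> | [-> | [-> | ->]]]; nia.
Qed.

Lemma sim_gap N0 d d' : sim (S N0) d d' ->
  fst d = fst d' /\
  (2 ^ Z.of_nat N0 + 1 <= Z.abs (snd d - snd d') <= 4 * 2 ^ Z.of_nat N0 - 1)%Z.
Proof.
  destruct d as [j k], d' as [j' k']. intros [Hj [Hnot Hadj]]. cbn [fst snd] in *.
  split; [exact Hj|].
  assert (HM : (0 < 2 ^ Z.of_nat N0)%Z) by (apply Z.pow_pos_nonneg; lia).
  apply quotient_gap; [exact HM|].
  specialize (Hnot N0 (Nat.lt_succ_diag_r N0)).
  unfold adjacent, parent in Hnot, Hadj; cbn [fst snd] in Hnot, Hadj.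
  rewrite Nat2Z.inj_succ, Z.pow_succ_r, Z.mul_comm, <- !Z.div_div in Hadj by lia.
  apply halves_adjacent_gap; [apply Hadj|].
  intros E. apply Hnot. split; [lia | exact E].
Qed.

Lemma gap_scale n : IZR (2 ^ Z.of_nat (2 * n + 6)) = 4 * G n.
Proof.
  rewrite <- pow_IZR. unfold G.
  replace (2 * n + 6)%nat with (2 * (n + 3))%nat by lia.
  rewrite pow_mult. replace (n + 3)%nat with (S (n + 2)) by lia. simpl.
  replace (2 * (2 * 1)) with 4 by ring. ring.
Qed.

Definition sim_l (n : nat) : Z * Z -> Z * Z -> Prop := sim (S (2 * n + 6)).

Lemma sim_l_facts n j k j' k' :
  in_Rplus (j, k) -> in_Rplus (j', k') -> sim_l n (j, k) (j', k') ->
  j' = j /\ 4 * G n + 1 <= Rabs (IZR k - IZR k') <= 4 * (4 * G n) - 1 /\ (3 <= k + k')%Z.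
Proof.
  unfold in_Rplus, sim_l; cbn [snd]. intros Hk Hk' Hs.
  destruct (sim_gap _ _ _ Hs) as [Hj Hgap]; cbn [fst snd] in Hj, Hgap.
  assert (H2 : (2 <= 2 ^ Z.of_nat (2 * n + 6))%Z).
  { replace (Z.of_nat (2 * n + 6)) with (1 + Z.of_nat (2 * n + 5))%Z by lia.
    rewrite Z.pow_add_r by lia.
    pose proof (Z.pow_pos_nonneg 2 (Z.of_nat (2 * n + 5)) ltac:(lia) ltac:(lia)). lia. }
  split; [congruence | split; [|lia]].
  rewrite <- (gap_scale n), <- minus_IZR, <- abs_IZR.
  split; [rewrite <- plus_IZR | rewrite <- mult_IZR, <- minus_IZR]; apply IZR_le; lia.
Qed.

Lemma half_difference_bounds (M P k k' a b : R) : 0 < P ->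
  M + 1 <= Rabs (k - k') <= 4 * M - 1 ->
  k * P <= a < (k + 1) * P -> k' * P <= b < (k' + 1) * P ->
  M * P / 2 <= Rabs ((b - a) / 2) <= 2 * M * P.
Proof.
  intros HP Hg Ha Hb. unfold Rabs in *.
  destruct (Rcase_abs (k - k')); destruct (Rcase_abs ((b - a) / 2)); split; nra.
Qed.

Lemma sim_l_contains n d d' : in_Rplus d -> in_Rplus d' -> sim_l n d d' ->
  forall p, S_ell (n + 2) (dyadic d) (dyadic d') p -> pset (Rpar n (msum (dyadic d) (dyadic d'))) p.
Proof.
  destruct d as [j k], d' as [j' k']. intros Hd Hd' Hs ? (a & b & Ha & Hb & ->).
  destruct (sim_l_facts n j k j' k' Hd Hd' Hs) as (-> & Hgap & Hs3).
  rewrite Rpar_sum by exact Hs3.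
  apply dyadic_iff in Ha, Hb. unfold in_Rplus in Hd, Hd'; cbn [snd] in Hd, Hd'.
  apply IZR_le in Hd, Hd'. pose proof (pw_pos j) as HP.
  pose proof (half_difference_bounds (4 * G n) _ _ _ a b HP Hgap Ha Hb).
  rewrite plus_IZR in *.
  apply par_contains; [exact HP | apply IZR_le in Hs3; rewrite plus_IZR in Hs3; lra
                      | nra | nra | lra | lra].
Qed.

Lemma exponent_gap n a b :
  pw a ^ 2 <= 201 * G n ^ 3 * pw b ^ 2 -> (a - b <= Z.of_nat (3 * n + 9))%Z.
Proof.
  intros Hp. destruct (Z_le_gt_dec (a - b) (Z.of_nat (3 * n + 9))) as [h|h]; [exact h|]. exfalso.
  assert (E : pw a = pw b * pw (a - b)) by (rewrite <- pw_add; f_equal; lia).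
  assert (Hm : 2 ^ (3 * n + 10) <= pw (a - b)) by (rewrite <- pw_nat; apply pw_le; lia).
  assert (H4 : (2 ^ (3 * n + 10)) ^ 2 = 256 * G n ^ 3).
  { unfold G. rewrite <- pow_mult, Nat.mul_comm, pow_mult.
    replace (2 ^ 2) with 4 by ring.
    replace (3 * n + 10)%nat with (4 + (n + 2) * 3)%nat by lia.
    rewrite pow_add, pow_mult. ring. }
  pose proof (pw_pos b). destruct (G_bounds n) as [HG _].
  assert (0 < G n ^ 3) by (apply pow_lt; lra).
  assert (0 <= 2 ^ (3 * n + 10)) by (apply pow_le; lra).
  assert ((2 ^ (3 * n + 10)) ^ 2 <= pw (a - b) ^ 2) by (apply pow_incr; lra).
  rewrite E, Rpow_mult_distr in Hp.
  assert (0 < pw b ^ 2) by (apply pow_lt; lra).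
  nra.
Qed.

Lemma partner_position (P1 Q s k1 k1' M : R) : 0 < P1 ->
  Rabs ((s + 1) * (P1 * Q) - (k1 + k1' + 1) * P1) <= 2 * (P1 * Q) + 2 * P1 ->
  Rabs (k1 - k1') <= 4 * M ->
  Rabs (k1 - ((s + 1) * Q - 1) / 2) <= 2 * M + Q + 1 /\
  Rabs (k1' - ((s + 1) * Q - 1) / 2) <= 2 * M + Q + 1.
Proof.
  intros HP Hc Hk.
  assert (Hc' : Rabs ((s + 1) * Q - (k1 + k1' + 1)) <= 2 * Q + 2).
  { replace ((s + 1) * (P1 * Q) - (k1 + k1' + 1) * P1)
      with (P1 * ((s + 1) * Q - (k1 + k1' + 1))) in Hc by ring.
    rewrite Rabs_mult, (Rabs_pos_eq P1) in Hc by lra.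
    apply Rmult_le_reg_l with P1; lra. }
  apply Rabs_le_bounds in Hc', Hk. split; apply Rabs_le; lra.
Qed.

Lemma int_window (z : Z) (c B : R) : Rabs (IZR z - c) <= B ->
  (- up B - 1 <= z - up c < up B)%Z.
Proof.
  intros Hb. apply Rabs_le_bounds in Hb.
  destruct (archimed c) as [c1 c2]. destruct (archimed B) as [b1 b2].
  split.
  - apply le_IZR. rewrite !minus_IZR, opp_IZR. lra.
  - apply lt_IZR. rewrite minus_IZR. lra.
Qed.

Definition Zrange (lo : Z) (len : nat) : list Z :=
  map (fun i => (lo + Z.of_nat i)%Z) (seq 0 len).

Lemma in_Zrange lo len z : (lo <= z < lo + Z.of_nat len)%Z -> In z (Zrange lo len).
Proof.
  intros H. apply in_map_iff. exists (Z.to_nat (z - lo)).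
  split; [rewrite Z2Nat.id; lia | apply in_seq; lia].
Qed.

Lemma length_Zrange lo len : length (Zrange lo len) = len.
Proof. unfold Zrange. rewrite length_map, length_seq. reflexivity. Qed.

Lemma length_le_by_injection {A B : Type} (f : A -> B) (s : list A) (box : list B) :
  NoDup s -> (forall x y, In x s -> In y s -> f x = f y -> x = y) ->
  (forall x, In x s -> In (f x) box) -> (length s <= length box)%nat.
Proof.
  intros Hnd Hinj Hin. rewrite <- (length_map f s).
  apply NoDup_incl_length; [apply NoDup_map_NoDup_ForallPairs; assumption|].
  intros y Hy. apply in_map_iff in Hy as (x & <- & Hx). exact (Hin x Hx).
Qed.

Definition window (n : nat) : Z := up (8 * G n + 2 ^ (3 * n + 9) + 1).

Definition expected_index (j s j1 : Z) : Z := up (((IZR s + 1) * pw (j - j1) - 1) / 2).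

Lemma overlap_constraints n j k k' j1 k1 j1' k1' x :
  in_Rplus (j, k) -> in_Rplus (j, k') -> sim_l n (j, k) (j, k') ->
  in_Rplus (j1, k1) -> in_Rplus (j1', k1') -> sim_l n (j1, k1) (j1', k1') ->
  dilate (1 + beta n) (Rpar n (msum (dyadic (j, k)) (dyadic (j, k')))) x ->
  dilate (1 + beta n) (Rpar n (msum (dyadic (j1, k1)) (dyadic (j1', k1')))) x ->
  j1' = j1 /\ (Z.abs (j1 - j) <= Z.of_nat (3 * n + 9))%Z /\
  (- window n - 1 <= k1 - expected_index j (k + k') j1 < window n)%Z /\
  (- window n - 1 <= k1' - expected_index j (k + k') j1 < window n)%Z.
Proof.
  intros Hd Hd' Hs Hq Hq' Hs1 D D1.
  destruct (sim_l_facts n _ _ _ _ Hd Hd' Hs) as (_ & _ & Hs3).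
  destruct (sim_l_facts n _ _ _ _ Hq Hq' Hs1) as (-> & Hgap1 & Hs31).
  split; [reflexivity|].
  rewrite Rpar_sum in D, D1 by assumption. destruct x as [x y].
  apply IZR_le in Hs3, Hs31.
  pose proof (pw_pos j) as HP. pose proof (pw_pos j1) as HP1.
  destruct (par_overlap n _ _ _ _ x y HP Hs3 HP1 Hs31 D D1) as [Hscale Hcentre].
  destruct (par_overlap n _ _ _ _ x y HP1 Hs31 HP Hs3 D1 D) as [Hscale' _].
  apply exponent_gap in Hscale, Hscale'.
  assert (HQ : pw (j - j1) <= 2 ^ (3 * n + 9)) by (rewrite <- pw_nat; apply pw_le; lia).
  assert (Hsplit : pw j = pw j1 * pw (j - j1)) by (rewrite <- pw_add; f_equal; lia).
  rewrite Hsplit in Hcentre.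
  rewrite (plus_IZR k1 k1') in Hcentre.
  assert (Hk : Rabs (IZR k1 - IZR k1') <= 4 * (4 * G n)) by lra.
  destruct (partner_position _ _ _ _ _ _ HP1 Hcentre Hk) as [K1 K1'].
  assert (HB : 2 * (4 * G n) + pw (j - j1) + 1 <= 8 * G n + 2 ^ (3 * n + 9) + 1) by lra.
  split; [lia|].
  unfold expected_index, window.
  split; apply int_window; lra.
Qed.

(* The number of admissible offsets (scale, first index, second index). *)
Definition overlap_bound (n : nat) : nat :=
  ((2 * (3 * n + 9) + 1) * (Z.to_nat (2 * window n + 1) * Z.to_nat (2 * window n + 1)))%nat.

Lemma overlap_count n d d' :
  in_Rplus d -> in_Rplus d' -> sim_l n d d' ->
  forall s : list ((Z * Z) * (Z * Z)), NoDup s ->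
  (forall q, In q s ->
     in_Rplus (fst q) /\ in_Rplus (snd q) /\ sim_l n (fst q) (snd q) /\
     exists x : R * R,
       dilate (1 + beta n) (Rpar n (msum (dyadic d) (dyadic d'))) x /\
       dilate (1 + beta n) (Rpar n (msum (dyadic (fst q)) (dyadic (snd q)))) x) ->
  (length s <= overlap_bound n)%nat.
Proof.
  destruct d as [j k], d' as [j' k']. intros Hd Hd' Hs s Hnd Hall.
  destruct (sim_l_facts n _ _ _ _ Hd Hd' Hs) as (-> & _).
  set (T := (3 * n + 9)%nat). set (W := window n).
  assert (Hconstr : forall j1 k1 j1' k1', In ((j1, k1), (j1', k1')) s ->
    j1' = j1 /\ (Z.abs (j1 - j) <= Z.of_nat T)%Z /\
    (- W - 1 <= k1 - expected_index j (k + k') j1 < W)%Z /\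
    (- W - 1 <= k1' - expected_index j (k + k') j1 < W)%Z).
  { intros j1 k1 j1' k1' Hin.
    destruct (Hall _ Hin) as (Hq & Hq' & Hs1 & x & D & D1).
    exact (overlap_constraints n j k k' j1 k1 j1' k1' x Hd Hd' Hs Hq Hq' Hs1 D D1). }
  set (offsets := fun q : (Z * Z) * (Z * Z) =>
    let e := expected_index j (k + k') (fst (fst q)) in
    ((fst (fst q) - j)%Z, ((snd (fst q) - e)%Z, (snd (snd q) - e)%Z))).
  set (L := Z.to_nat (2 * W + 1)).
  set (box := list_prod (Zrange (- Z.of_nat T) (2 * T + 1))
                        (list_prod (Zrange (- W - 1) L) (Zrange (- W - 1) L))).
  replace (overlap_bound n) with (length box)
    by (unfold box; rewrite !length_prod, !length_Zrange; reflexivity).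
  apply (length_le_by_injection offsets); [exact Hnd | |].
  - intros [[j1 k1] [j1' k1']] [[j2 k2] [j2' k2']] Hin1 Hin2 E.
    destruct (Hconstr _ _ _ _ Hin1) as (-> & _). destruct (Hconstr _ _ _ _ Hin2) as (-> & _).
    unfold offsets in E; cbn [fst snd] in E. injection E as Ej Ek Ek'.
    assert (j1 = j2) by lia. subst j2. repeat f_equal; lia.
  - intros [[j1 k1] [j1' k1']] Hin.
    destruct (Hconstr _ _ _ _ Hin) as (_ & Hj & Hk1 & Hk1').
    assert (HW : (0 <= W)%Z).
    { apply le_IZR. unfold W, window. destruct (archimed (8 * G n + 2 ^ (3 * n + 9) + 1)).
      destruct (G_bounds n) as [HG _]. pose proof (pow_le 2 (3 * n + 9) ltac:(lra)). lra. }
    unfold offsets, box; cbn [fst snd].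
    apply in_prod; [apply in_Zrange; lia|].
    apply in_prod; apply in_Zrange; unfold L; rewrite Z2Nat.id by lia; lia.
Qed.

Theorem mainTheorem11 :
  forall l : nat, (1 < l)%nat -> Nat.Odd l ->
  exists N : nat,
  exists Rmap : (R -> Prop) -> para,
    (forall J : R -> Prop, nondegenerate (Rmap J)) /\
    (forall d d' : Z * Z, in_Rplus d -> in_Rplus d' -> sim N d d' ->
       forall p, S_ell l (dyadic d) (dyadic d') p ->
         pset (Rmap (msum (dyadic d) (dyadic d'))) p) /\
    exists beta : R, 0 < beta /\
    exists C : nat,
      forall d d' : Z * Z, in_Rplus d -> in_Rplus d' -> sim N d d' ->
      forall s : list ((Z * Z) * (Z * Z)),
        NoDup s ->
        (forall q, In q s ->
           in_Rplus (fst q) /\ in_Rplus (snd q) /\ sim N (fst q) (snd q) /\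
           exists x : R * R,
             dilate (1 + beta) (Rmap (msum (dyadic d) (dyadic d'))) x /\
             dilate (1 + beta) (Rmap (msum (dyadic (fst q)) (dyadic (snd q)))) x) ->
        (length s <= C)%nat.
Proof.
  intros l Hl _.
  destruct l as [|[|n]]; [lia | lia |]. replace (S (S n)) with (n + 2)%nat by lia.
  exists (S (2 * n + 6)), (Rpar n).
  split; [exact (Rpar_nondegenerate n)|].
  split; [exact (sim_l_contains n)|].
  exists (beta n). split; [apply beta_bounds|].
  exists (overlap_bound n). exact (overlap_count n).
Qed.
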